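(* For $p\in\mathbb C\langle{\bf X},{\bf Y}\rangle$ define $\|p\|_u=\sup\|p({\bf T}_1,{\bf T}_2)\|$, the supremum taken over all Hilbert spaces $\mathcal H$ and all $({\bf T}_1,{\bf T}_2)\in{\bf P}^-_{\bf n}(\mathcal H)$. Then $\|\cdot\|_u$ is an algebra norm on $\mathbb C\langle{\bf X},{\bf Y}\rangle$; in particular $\|p\|_u=0$ implies $p=0$.
   Context: ${\bf P}^-_{\bf n}(\mathcal H)$, ${\bf n}=(n_1,n_2)$, is the set of pairs $({\bf X},{\bf Y})$ of row contractions ${\bf X}=[X_1,\dots,X_{n_1}]$, ${\bf Y}=[Y_1,\dots,Y_{n_2}]$ in $B(\mathcal H)$ (i.e. $\sum X_iX_i^*\le I$, $\sum Y_jY_j^*\le I$) with $X_iY_j=Y_jX_i$ for all $i,j$. $\mathbb C\langle{\bf X},{\bf Y}\rangle$ is the algebra of complex polynomials in indeterminates $X_1,\dots,X_{n_1},Y_1,\dots,Y_{n_2}$ where the $X$'s are mutually noncommuting, the $Y$'s are mutually noncommuting, and $X_iY_j=Y_jX_i$; $p({\bf T}_1,{\bf T}_2)$ denotes evaluation. *)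

From Stdlib Require Import List.
From Stdlib Require Vectors.Fin.
From Stdlib Require Import Reals.
Open Scope R_scope.

Record C : Type := mkC { re : R; im : R }.
Definition C0 : C := mkC 0 0.
Definition C1 : C := mkC 1 0.
Definition Cadd (a b : C) : C := mkC (re a + re b) (im a + im b).
Definition Cmul (a b : C) : C :=
  mkC (re a * re b - im a * im b) (re a * im b + im a * re b).
Definition Cconj (a : C) : C := mkC (re a) (- im a).
Definition Cmod (a : C) : R := sqrt (re a * re a + im a * im a).

Record Hilbert : Type := {
  hcar :> Type;
  hzero : hcar;
  hadd : hcar -> hcar -> hcar;
  hopp : hcar -> hcar;
  hscal : C -> hcar -> hcar;
  hinner : hcar -> hcar -> C;
  hadd_assoc : forall x y z, hadd x (hadd y z) = hadd (hadd x y) z;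
  hadd_comm : forall x y, hadd x y = hadd y x;
  hadd_0 : forall x, hadd hzero x = x;
  hadd_opp : forall x, hadd x (hopp x) = hzero;
  hscal_1 : forall x, hscal C1 x = x;
  hscal_assoc : forall a b x, hscal a (hscal b x) = hscal (Cmul a b) x;
  hscal_distr_v : forall a x y, hscal a (hadd x y) = hadd (hscal a x) (hscal a y);
  hscal_distr_s : forall a b x, hscal (Cadd a b) x = hadd (hscal a x) (hscal b x);
  hinner_add_l : forall x y z, hinner (hadd x y) z = Cadd (hinner x z) (hinner y z);
  hinner_scal_l : forall a x y, hinner (hscal a x) y = Cmul a (hinner x y);
  hinner_conj : forall x y, hinner y x = Cconj (hinner x y);
  hinner_pos : forall x, 0 <= re (hinner x x);
  hinner_def : forall x, hinner x x = C0 -> x = hzero;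
  hcomplete : forall u : nat -> hcar,
    (forall eps, 0 < eps -> exists N, forall m n, (N <= m)%nat -> (N <= n)%nat ->
       sqrt (re (hinner (hadd (u m) (hopp (u n))) (hadd (u m) (hopp (u n))))) < eps) ->
    exists l, forall eps, 0 < eps -> exists N, forall n, (N <= n)%nat ->
       sqrt (re (hinner (hadd (u n) (hopp l)) (hadd (u n) (hopp l)))) < eps
}.

Arguments hzero {h}. Arguments hadd {h}. Arguments hopp {h}.
Arguments hscal {h}. Arguments hinner {h}.

Definition hnorm {H : Hilbert} (x : H) : R := sqrt (re (hinner x x)).

Definition op (H : Hilbert) := H -> H.

Definition bounded_linear {H : Hilbert} (T : op H) : Prop :=
  (forall x y, T (hadd x y) = hadd (T x) (T y)) /\
  (forall a x, T (hscal a x) = hscal a (T x)) /\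
  (exists M, forall x, hnorm (T x) <= M * hnorm x).

Definition is_adjoint {H : Hilbert} (T A : op H) : Prop :=
  forall x y, hinner (T x) y = hinner x (A y).

Definition op_le {H : Hilbert} (S T : op H) : Prop :=
  forall h, im (hinner (hadd (T h) (hopp (S h))) h) = 0 /\
            0 <= re (hinner (hadd (T h) (hopp (S h))) h).

Fixpoint fin_vsum {H : Hilbert} (n : nat) : (Fin.t n -> H) -> H :=
  match n with
  | O => fun _ => hzero
  | S m => fun f => hadd (f Fin.F1) (fin_vsum m (fun i => f (Fin.FS i)))
  end.

Definition row_contraction {H : Hilbert} (n : nat) (X : Fin.t n -> op H) : Prop :=
  (forall i, bounded_linear (X i)) /\
  exists A : Fin.t n -> op H,
    (forall i, is_adjoint (X i) (A i)) /\
    op_le (fun h => fin_vsum n (fun i => X i (A i h))) (fun h => h).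

Definition in_Pn {H : Hilbert} (n1 n2 : nat) (X : Fin.t n1 -> op H)
  (Y : Fin.t n2 -> op H) : Prop :=
  row_contraction n1 X /\ row_contraction n2 Y /\
  (forall i j h, X i (Y j h) = Y j (X i h)).

(* ---------- the algebra C<X,Y> ----------
   Since the X's commute with the Y's, every monomial is X_alpha Y_beta for a
   unique pair of words (alpha, beta); a polynomial is represented by a finite
   list of terms (alpha, beta, c), and two representations denote the same
   polynomial iff they have the same coefficient function [coeff]. *)
Definition word (n : nat) := list (Fin.t n).
Definition term (n1 n2 : nat) := (word n1 * word n2 * C)%type.
Definition ncpoly (n1 n2 : nat) := list (term n1 n2).

Definition word_eq_dec {n : nat} : forall a b : word n, {a = b} + {a <> b} :=
  list_eq_dec (@Fin.eq_dec n).

Definition coeff {n1 n2 : nat} (p : ncpoly n1 n2) (w : word n1 * word n2) : C :=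
  fold_right (fun t acc =>
    let '(a, b, c) := t in
    if word_eq_dec a (fst w) then
      if word_eq_dec b (snd w) then Cadd c acc else acc
    else acc) C0 p.

Definition padd {n1 n2 : nat} (p q : ncpoly n1 n2) : ncpoly n1 n2 := p ++ q.
Definition pscale {n1 n2 : nat} (a : C) (p : ncpoly n1 n2) : ncpoly n1 n2 :=
  map (fun t => let '(x, y, c) := t in (x, y, Cmul a c)) p.
Definition pmul {n1 n2 : nat} (p q : ncpoly n1 n2) : ncpoly n1 n2 :=
  flat_map (fun t => let '(x, y, c) := t in
    map (fun t' => let '(x', y', c') := t' in (x ++ x', y ++ y', Cmul c c')) q) p.

Definition eval_word {H : Hilbert} {n : nat} (T : Fin.t n -> op H) (w : word n)
  (h : H) : H := fold_right (fun i acc => T i acc) h w.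

Definition peval {H : Hilbert} {n1 n2 : nat} (p : ncpoly n1 n2)
  (T1 : Fin.t n1 -> op H) (T2 : Fin.t n2 -> op H) : op H :=
  fun h => fold_right (fun t acc =>
    let '(x, y, c) := t in
    hadd (hscal c (eval_word T1 x (eval_word T2 y h))) acc) hzero p.

Definition is_opnorm {H : Hilbert} (T : op H) (r : R) : Prop :=
  is_lub (fun y => exists h : H, hnorm h <= 1 /\ y = hnorm (T h)) r.

Definition unorm_set {n1 n2 : nat} (p : ncpoly n1 n2) : R -> Prop :=
  fun r => exists (H : Hilbert) (T1 : Fin.t n1 -> op H) (T2 : Fin.t n2 -> op H),
    in_Pn n1 n2 T1 T2 /\ is_opnorm (peval p T1 T2) r.

(* Every member of a row contraction is a contraction, so [|p(T1,T2)|] is at most the sum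
   of the moduli of the coefficients of [p] and the supremum [|p|_u] is finite. Since
   the [X]'s commute with the [Y]'s, [p |-> p(T1,T2)] is an algebra homomorphism for every
   [(T1,T2)] in [P^-_n(H)], so each [|p(T1,T2)|] is a submultiplicative seminorm in [p],
   and so is their supremum. For definiteness, let [X_i] and [Y_j] be the creation
   operators on the two factors of a tensor product of (truncated) full Fock spaces; they
   form a commuting pair of row contractions, and [p(X,Y)] maps the vacuum to the vector
   whose component at [e_a (x) e_b] is the coefficient of [X_a Y_b] in [p]. Hence every
   coefficient of [p] is bounded by [|p|_u]. *)

From Stdlib Require Import Reals Lra List Lia Wf_nat FunctionalExtensionality.
Open Scope R_scope.

Lemma mkC_eq : forall a b c d, a = c -> b = d -> mkC a b = mkC c d.
Proof. intros; subst; reflexivity. Qed.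

Ltac Cdes := repeat match goal with c : C |- _ => destruct c end.
Ltac Csolve := unfold Cadd, Cmul, Cconj, C0, C1 in *; Cdes; simpl in *; apply mkC_eq; ring.

Ltac gen_inner :=
  repeat match goal with |- context [hinner ?a ?b] => generalize (hinner a b); intro end.

Definition Cm1 : C := mkC (-1) 0.

Lemma Cadd_0l z : Cadd C0 z = z.
Proof. destruct z; unfold Cadd, C0; simpl; f_equal; ring. Qed.

Lemma Cadd_0r z : Cadd z C0 = z.
Proof. destruct z; unfold Cadd, C0; simpl; f_equal; ring. Qed.

Lemma Cmod_nonneg a : 0 <= Cmod a.
Proof. unfold Cmod. apply sqrt_pos. Qed.

Lemma Cmod_real a : 0 <= a -> Cmod (mkC a 0) = a.
Proof.
  intro. unfold Cmod. simpl. replace (a * a + 0 * 0) with (a * a) by ring.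
  apply sqrt_square; auto.
Qed.

Lemma Cmod_eq0 c : Cmod c = 0 -> c = C0.
Proof.
  destruct c as [u v]. unfold Cmod. simpl. intro E.
  apply sqrt_eq_0 in E; [|nra]. unfold C0. f_equal; nra.
Qed.

(** * Elementary Hilbert space theory *)

Section HilbertBasics.
Variable H : Hilbert.
Implicit Types x y z : H.

Lemma hadd_0r x : hadd x hzero = x.
Proof. rewrite hadd_comm; apply hadd_0. Qed.

Lemma self_add_zero (a : H) : a = hadd a a -> a = hzero.
Proof.
  intro E. transitivity (hadd (hadd a a) (hopp a)).
  - rewrite <- hadd_assoc, hadd_opp, hadd_0r. reflexivity.
  - rewrite <- E. apply hadd_opp.
Qed.

Lemma hscal_C0 x : hscal C0 x = hzero.
Proof.
  apply self_add_zero. rewrite <- hscal_distr_s. f_equal. Csolve.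
Qed.

Lemma hscal_zero a : hscal a (@hzero H) = hzero.
Proof.
  apply self_add_zero. rewrite <- hscal_distr_v, hadd_0. reflexivity.
Qed.

Lemma hopp_scal x : hopp x = hscal Cm1 x.
Proof.
  assert (E : hadd x (hscal Cm1 x) = hzero).
  { rewrite <- (hscal_1 _ x) at 1. rewrite <- hscal_distr_s.
    rewrite <- (hscal_C0 x). f_equal. unfold Cm1; Csolve. }
  rewrite <- (hadd_0r (hopp x)). rewrite <- E.
  rewrite hadd_assoc. rewrite (hadd_comm _ (hopp x) x), hadd_opp, hadd_0. reflexivity.
Qed.

Lemma inner_0l y : hinner (@hzero H) y = C0.
Proof.
  rewrite <- (hscal_C0 hzero), hinner_scal_l. Csolve.
Qed.

Lemma inner_0r y : hinner y (@hzero H) = C0.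
Proof. rewrite hinner_conj, inner_0l. Csolve. Qed.

Lemma inner_add_r x y z : hinner x (hadd y z) = Cadd (hinner x y) (hinner x z).
Proof.
  rewrite (hinner_conj _ (hadd y z) x), hinner_add_l.
  rewrite (hinner_conj _ y x), (hinner_conj _ z x). Csolve.
Qed.

Lemma inner_scal_r a x y : hinner x (hscal a y) = Cmul (Cconj a) (hinner x y).
Proof.
  rewrite (hinner_conj _ (hscal a y) x), hinner_scal_l, (hinner_conj _ y x). Csolve.
Qed.

Lemma inner_opp_l x y : hinner (hopp x) y = Cmul Cm1 (hinner x y).
Proof. rewrite hopp_scal, hinner_scal_l. reflexivity. Qed.

Lemma im_inner_self x : im (hinner x x) = 0.
Proof.
  pose proof (hinner_conj _ x x) as E. destruct (hinner x x) as [a b].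
  unfold Cconj in E. simpl in *. injection E. lra.
Qed.

Lemma hnorm_nonneg x : 0 <= hnorm x.
Proof. unfold hnorm. apply sqrt_pos. Qed.

Lemma hnorm_sq x : hnorm x * hnorm x = re (hinner x x).
Proof. unfold hnorm. apply sqrt_sqrt, hinner_pos. Qed.

Lemma hnorm_zero_eq x : hnorm x = 0 -> x = hzero.
Proof.
  intro E. apply hinner_def. pose proof (hnorm_sq x) as S. rewrite E in S.
  pose proof (im_inner_self x). destruct (hinner x x) as [a b]; simpl in *.
  unfold C0. f_equal; lra.
Qed.

Lemma hnorm_hzero : hnorm (@hzero H) = 0.
Proof. unfold hnorm. rewrite inner_0l. simpl. apply sqrt_0. Qed.

Lemma expand_real t x y :
  re (hinner (hadd x (hscal (mkC t 0) y)) (hadd x (hscal (mkC t 0) y))) =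
  re (hinner x x) + 2 * t * re (hinner x y) + t * t * re (hinner y y).
Proof.
  rewrite hinner_add_l, !inner_add_r, ?hinner_scal_l, ?inner_scal_r, ?hinner_scal_l.
  rewrite (hinner_conj _ x y).
  destruct (hinner x x), (hinner x y), (hinner y y). simpl. ring.
Qed.

Lemma re_inner_le_hnorm x y : re (hinner x y) <= hnorm x * hnorm y.
Proof.
  set (A := re (hinner x x)). set (B := re (hinner y y)). set (r := re (hinner x y)).
  pose proof (hnorm_sq x) as Sx. pose proof (hnorm_sq y) as Sy.
  pose proof (hnorm_nonneg x). pose proof (hnorm_nonneg y).
  destruct (Req_dec B 0) as [HB|HB].
  - assert (y = hzero).
    { apply hnorm_zero_eq. fold B in Sy. rewrite HB in Sy. nra. }
    subst y. unfold r. rewrite inner_0r. simpl. nra.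
  - assert (Bpos : 0 < B) by (pose proof (hinner_pos _ y); fold B in H2; lra).
    pose proof (hinner_pos _ (hadd x (hscal (mkC (-r/B) 0) y))) as P.
    rewrite expand_real in P. fold A B r in P.
    set (t := -r/B) in P. assert (tB : t * B = - r) by (unfold t; field; lra).
    assert (P2 : 0 <= A + t * r).
    { replace (t * t * B) with (t * (t * B)) in P by ring. rewrite tB in P. lra. }
    assert (P3 : 0 <= B * (A + t * r)) by (apply Rmult_le_pos; lra).
    assert (r * r <= A * B).
    { replace (B * (A + t * r)) with (A * B + (t * B) * r) in P3 by ring.
      rewrite tB in P3. lra. }
    fold A in Sx. fold B in Sy.
    destruct (Rle_dec r (hnorm x * hnorm y)) as [|Hn]; auto.
    exfalso. apply Rnot_le_lt in Hn.
    assert (0 <= hnorm x * hnorm y) by (apply Rmult_le_pos; auto).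
    assert ((hnorm x * hnorm y) * (hnorm x * hnorm y) < r * r) by nra.
    nra.
Qed.

Lemma hnorm_triangle x y : hnorm (hadd x y) <= hnorm x + hnorm y.
Proof.
  pose proof (hnorm_sq (hadd x y)) as S.
  rewrite hinner_add_l, !inner_add_r in S. simpl in S.
  pose proof (re_inner_le_hnorm x y). pose proof (re_inner_le_hnorm y x).
  rewrite <- (hnorm_sq x), <- (hnorm_sq y) in S.
  pose proof (hnorm_nonneg x). pose proof (hnorm_nonneg y). pose proof (hnorm_nonneg (hadd x y)).
  nra.
Qed.

Lemma hnorm_scal a x : hnorm (hscal a x) = Cmod a * hnorm x.
Proof.
  unfold hnorm, Cmod. rewrite hinner_scal_l, inner_scal_r.
  pose proof (im_inner_self x). pose proof (hinner_pos _ x).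
  destruct (hinner x x) as [p q]. simpl in *. subst q.
  rewrite <- sqrt_mult. f_equal. ring. nra. auto.
Qed.

Lemma hopp_zero : hopp (@hzero H) = hzero.
Proof. rewrite hopp_scal, hscal_zero. reflexivity. Qed.

End HilbertBasics.

Fixpoint fin_rsum (n : nat) : (Fin.t n -> R) -> R :=
  match n with
  | O => fun _ => 0
  | S m => fun f => f Fin.F1 + fin_rsum m (fun i => f (Fin.FS i))
  end.

Lemma fin_rsum_nonneg n f : (forall j, 0 <= f j) -> 0 <= fin_rsum n f.
Proof.
  revert f; induction n; intros f Hf; simpl. lra.
  pose proof (Hf Fin.F1). pose proof (IHn (fun i => f (Fin.FS i)) (fun j => Hf _)). lra.
Qed.

Lemma fin_rsum_ge n (i : Fin.t n) f : (forall j, 0 <= f j) -> f i <= fin_rsum n f.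
Proof.
  revert f. induction i; intros f Hf; simpl.
  - pose proof (fin_rsum_nonneg n (fun i => f (Fin.FS i)) (fun j => Hf _)). lra.
  - pose proof (IHi (fun i => f (Fin.FS i)) (fun j => Hf _)). pose proof (Hf Fin.F1).
    simpl in *. lra.
Qed.

(** * Bounded operators and row contractions *)

Section Operators.
Variable H : Hilbert.

Definition homog (T : op H) := forall a x, T (hscal a x) = hscal a (T x).
Definition additive (T : op H) := forall x y, T (hadd x y) = hadd (T x) (T y).

Lemma homog_zero T : homog T -> T hzero = hzero.
Proof. intro h. rewrite <- (hscal_C0 _ hzero), h, !hscal_C0. reflexivity. Qed.

Lemma opnorm_nonneg (T : op H) r : is_opnorm T r -> 0 <= r.
Proof.
  intros [U _]. pose proof (hnorm_nonneg _ (T hzero)).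
  assert (hnorm (T hzero) <= r); [|lra].
  apply U. exists hzero. split; auto. rewrite hnorm_hzero. lra.
Qed.

Lemma opnorm_le1 (T : op H) r h : is_opnorm T r -> hnorm h <= 1 -> hnorm (T h) <= r.
Proof. intros [U _] Hh. apply U. exists h; auto. Qed.

Lemma opnorm_bound (T : op H) r : homog T -> is_opnorm T r -> forall h, hnorm (T h) <= r * hnorm h.
Proof.
  intros Ho Hr h. pose proof (opnorm_nonneg _ _ Hr).
  destruct (Req_dec (hnorm h) 0) as [E|E].
  - apply hnorm_zero_eq in E. subst h. rewrite homog_zero, hnorm_hzero; auto. lra.
  - pose proof (hnorm_nonneg _ h). set (n := hnorm h) in *.
    assert (np : 0 < n) by lra.
    set (h' := hscal (mkC (/n) 0) h).
    assert (N1 : hnorm h' = 1).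
    { unfold h'. rewrite hnorm_scal, Cmod_real. fold n. field. lra.
      left. apply Rinv_0_lt_compat. auto. }
    pose proof (opnorm_le1 _ _ _ Hr (Req_le _ _ N1)) as L.
    unfold h' in L. rewrite Ho, hnorm_scal, Cmod_real in L.
    2: left; apply Rinv_0_lt_compat; auto.
    apply (Rmult_le_compat_l n) in L; [|lra].
    rewrite <- Rmult_assoc, Rinv_r in L; lra.
Qed.

Lemma opnorm_least (T : op H) r M :
  is_opnorm T r -> (forall h, hnorm (T h) <= M * hnorm h) -> 0 <= M -> r <= M.
Proof.
  intros [_ L] HM M0. apply L. intros y [h [Hh ->]].
  pose proof (HM h). pose proof (Rmult_le_compat_l M _ _ M0 Hh). lra.
Qed.

Lemma opnorm_exists (T : op H) M :
  (forall h, hnorm (T h) <= M * hnorm h) -> 0 <= M -> exists r, is_opnorm T r.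
Proof.
  intros HM M0.
  destruct (completeness (fun y => exists h : H, hnorm h <= 1 /\ y = hnorm (T h))) as [r Hr].
  - exists M. intros y [h [Hh ->]].
    pose proof (HM h). pose proof (Rmult_le_compat_l M _ _ M0 Hh). lra.
  - exists (hnorm (T hzero)). exists hzero. split; auto. rewrite hnorm_hzero. lra.
  - exists r. exact Hr.
Qed.

Lemma re_inner_vsum n (f : Fin.t n -> H) (h : H) :
  re (hinner (fin_vsum n f) h) = fin_rsum n (fun i => re (hinner (f i) h)).
Proof.
  revert f; induction n; intro f; simpl.
  - rewrite inner_0l. reflexivity.
  - rewrite hinner_add_l. simpl. rewrite IHn. reflexivity.
Qed.

Section RowContraction.
Variables (n : nat) (X A : Fin.t n -> op H).
Hypothesis X_adj : forall i, is_adjoint (X i) (A i).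
Hypothesis row_le : op_le (fun h => fin_vsum n (fun i => X i (A i h))) (fun h => h).

(* [<X_j A_j h, h> = |A_j h|^2], so [sum_j X_j X_j^* <= I] bounds each [|A_i h|^2] by [|h|^2]. *)
Lemma row_adjoint_contractive i h : hnorm (A i h) <= hnorm h.
Proof.
  destruct (row_le h) as [_ P].
  rewrite hinner_add_l, inner_opp_l in P. simpl in P. rewrite re_inner_vsum in P.
  rewrite (functional_extensionality _ (fun j => re (hinner (A j h) (A j h))))
    in P by (intro j; rewrite X_adj; reflexivity).
  pose proof (fin_rsum_ge n i _ (fun j => hinner_pos _ (A j h))).
  destruct (hinner (fin_vsum n (fun j => X j (A j h))) h). simpl in *.
  apply sqrt_le_1_alt. lra.
Qed.

Lemma row_component_contractive i h : hnorm (X i h) <= hnorm h.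
Proof.
  assert (E : hnorm (X i h) * hnorm (X i h) = re (hinner h (A i (X i h))))
    by (rewrite hnorm_sq, X_adj; reflexivity).
  pose proof (re_inner_le_hnorm _ h (A i (X i h))).
  pose proof (row_adjoint_contractive i (X i h)).
  pose proof (hnorm_nonneg _ h). pose proof (hnorm_nonneg _ (X i h)).
  nra.
Qed.

Lemma row_contraction_of_adjoint :
  (forall i, additive (X i)) -> (forall i, homog (X i)) -> row_contraction n X.
Proof.
  intros Hadd Hhom. split.
  - intro i. split; [apply Hadd|]. split; [apply Hhom|].
    exists 1. intro x. rewrite Rmult_1_l. apply row_component_contractive.
  - exists A. split; [exact X_adj|exact row_le].
Qed.

End RowContraction.

Lemma row_contraction_contractive n (X : Fin.t n -> op H) :
  row_contraction n X -> forall i h, hnorm (X i h) <= hnorm h.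
Proof. intros [_ [A [Hadj Hle]]]. exact (row_component_contractive n X A Hadj Hle). Qed.

End Operators.

(** * Evaluation of polynomials *)

Section Evaluation.
Variable H : Hilbert.
Variables n1 n2 : nat.
Variable T1 : Fin.t n1 -> op H.
Variable T2 : Fin.t n2 -> op H.

Definition lin {n} (T : Fin.t n -> op H) := forall i, additive H (T i) /\ homog H (T i).

Lemma eval_word_additive {n} (T : Fin.t n -> op H) w : lin T -> additive H (eval_word T w).
Proof.
  intros L x y. induction w; simpl; auto. rewrite IHw. apply (L a).
Qed.

Lemma eval_word_homog {n} (T : Fin.t n -> op H) w : lin T -> homog H (eval_word T w).
Proof.
  intros L c x. induction w; simpl; auto. rewrite IHw. apply (L a).
Qed.

Lemma eval_word_app {n} (T : Fin.t n -> op H) x y h :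
  eval_word T (x ++ y) h = eval_word T x (eval_word T y h).
Proof. unfold eval_word. apply fold_right_app. Qed.

Lemma eval_word_contractive {n} (T : Fin.t n -> op H) w h :
  (forall i h, hnorm (T i h) <= hnorm h) -> hnorm (eval_word T w h) <= hnorm h.
Proof.
  intro K. induction w; simpl. lra. eapply Rle_trans; [apply K|]. auto.
Qed.

Hypothesis T1_lin : lin T1.
Hypothesis T2_lin : lin T2.
Hypothesis T12_comm : forall i j h, T1 i (T2 j h) = T2 j (T1 i h).

Lemma eval_word_comm x y h : eval_word T1 x (eval_word T2 y h) = eval_word T2 y (eval_word T1 x h).
Proof.
  assert (A : forall i y h, T1 i (eval_word T2 y h) = eval_word T2 y (T1 i h)).
  { intros i y0. induction y0; intro h0; simpl; auto. rewrite T12_comm, IHy0. reflexivity. }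
  revert h. induction x; intro h; simpl; auto. rewrite IHx, A. reflexivity.
Qed.

Definition monomial (x : word n1) (y : word n2) (h : H) := eval_word T1 x (eval_word T2 y h).

Lemma monomial_additive x y : additive H (monomial x y).
Proof.
  intros u v. unfold monomial.
  rewrite (eval_word_additive T2 y T2_lin), (eval_word_additive T1 x T1_lin). reflexivity.
Qed.

Lemma monomial_homog x y : homog H (monomial x y).
Proof.
  intros a u. unfold monomial.
  rewrite (eval_word_homog T2 y T2_lin), (eval_word_homog T1 x T1_lin). reflexivity.
Qed.

Lemma peval_cons x y c p h :
  peval ((x, y, c) :: p) T1 T2 h = hadd (hscal c (monomial x y h)) (peval p T1 T2 h).
Proof. reflexivity. Qed.

Lemma peval_app p q h :
  peval (p ++ q) T1 T2 h = hadd (peval p T1 T2 h) (peval q T1 T2 h).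
Proof.
  induction p as [|[[x y] c] p IH]; simpl.
  - rewrite hadd_0. reflexivity.
  - unfold peval in *. simpl. rewrite IH, hadd_assoc. reflexivity.
Qed.

Lemma peval_scale a p h :
  peval (pscale a p) T1 T2 h = hscal a (peval p T1 T2 h).
Proof.
  induction p as [|[[x y] c] p IH]; simpl.
  - unfold peval; simpl. rewrite hscal_zero. reflexivity.
  - unfold peval in *. simpl. rewrite IH, hscal_distr_v, hscal_assoc. reflexivity.
Qed.

Lemma peval_homog p : homog H (peval p T1 T2).
Proof.
  intros a u. induction p as [|[[x y] c] p IH].
  - unfold peval; simpl. rewrite hscal_zero. reflexivity.
  - rewrite !peval_cons, IH, monomial_homog, hscal_distr_v, !hscal_assoc.
    f_equal. f_equal. Csolve.
Qed.

Lemma peval_map x y c q h :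
  peval (map (fun t' => let '(x', y', c') := t' in (x ++ x', y ++ y', Cmul c c')) q) T1 T2 h
  = hscal c (monomial x y (peval q T1 T2 h)).
Proof.
  induction q as [|[[x' y'] c'] q IH].
  - unfold peval; simpl. fold (@peval H n1 n2 nil T1 T2 h).
    assert (E : monomial x y hzero = hzero) by (apply homog_zero, monomial_homog).
    change (fold_right _ hzero nil) with (@hzero H). rewrite E, hscal_zero. reflexivity.
  - simpl map.
    rewrite !peval_cons, IH, monomial_additive, monomial_homog, hscal_distr_v, hscal_assoc.
    f_equal. f_equal. unfold monomial. rewrite !eval_word_app. f_equal.
    rewrite <- eval_word_comm. reflexivity.
Qed.

Lemma peval_mul p q h :
  peval (pmul p q) T1 T2 h = peval p T1 T2 (peval q T1 T2 h).
Proof.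
  induction p as [|[[x y] c] p IH].
  - reflexivity.
  - unfold pmul. simpl flat_map. rewrite peval_app. fold (pmul p q).
    rewrite IH, peval_map, peval_cons. reflexivity.
Qed.

Definition coef_l1 (p : ncpoly n1 n2) : R :=
  fold_right (fun t acc => let '(_, _, c) := t in Cmod c + acc) 0 p.

Lemma coef_l1_nonneg p : 0 <= coef_l1 p.
Proof.
  induction p as [|[[x y] c] p IH]; simpl. lra. pose proof (Cmod_nonneg c). lra.
Qed.

Lemma peval_norm_le_coef_l1 p h :
  (forall i h, hnorm (T1 i h) <= hnorm h) -> (forall i h, hnorm (T2 i h) <= hnorm h) ->
  hnorm (peval p T1 T2 h) <= coef_l1 p * hnorm h.
Proof.
  intros K1 K2. induction p as [|[[x y] c] p IH].
  - unfold peval; simpl. rewrite hnorm_hzero. lra.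
  - rewrite peval_cons. simpl coef_l1. eapply Rle_trans; [apply hnorm_triangle|].
    rewrite hnorm_scal.
    assert (Hm : hnorm (monomial x y h) <= hnorm h).
    { unfold monomial. eapply Rle_trans; apply eval_word_contractive; auto. }
    pose proof (Rmult_le_compat_l _ _ _ (Cmod_nonneg c) Hm). lra.
Qed.

End Evaluation.

Section Coefficients.
Variables n1 n2 : nat.

Definition monomial_eq_dec (w w' : word n1 * word n2) : {w = w'} + {w <> w'}.
Proof.
  destruct w as [a b], w' as [a' b'].
  destruct (word_eq_dec a a'); [|right; congruence].
  destruct (word_eq_dec b b'); [|right; congruence]. left; congruence.
Defined.

Definition has_monomial (w : word n1 * word n2) (t : term n1 n2) : bool :=
  let '(a, b, _) := t in
  if word_eq_dec a (fst w) then if word_eq_dec b (snd w) then true else false else false.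

Lemma has_monomial_true w a b c : has_monomial w (a, b, c) = true <-> (a, b) = w.
Proof.
  destruct w as [a' b']. simpl.
  destruct (word_eq_dec a a'), (word_eq_dec b b'); split; intro; subst; try congruence.
Qed.

Lemma coeff_cons (t : term n1 n2) p w :
  coeff (t :: p) w =
  let '(_, _, c) := t in if has_monomial w t then Cadd c (coeff p w) else coeff p w.
Proof.
  destruct t as [[a b] c]. unfold coeff at 1. simpl. fold (coeff p w).
  destruct (word_eq_dec a (fst w)), (word_eq_dec b (snd w)); reflexivity.
Qed.

Lemma coeff_filter_same p w :
  coeff (filter (has_monomial w) p) w = coeff p w.
Proof.
  induction p as [|[[a b] c] p IH]; [reflexivity|]. cbn [filter].
  destruct (has_monomial w (a, b, c)) eqn:E.
  - rewrite !coeff_cons, E, IH. reflexivity.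
  - rewrite coeff_cons, E. auto.
Qed.

Lemma coeff_filter_other p w w' :
  coeff (filter (fun t => negb (has_monomial w t)) p) w' =
  if monomial_eq_dec w' w then C0 else coeff p w'.
Proof.
  induction p as [|[[a b] c] p IH]; cbn [filter].
  - destruct (monomial_eq_dec w' w); reflexivity.
  - destruct (has_monomial w (a, b, c)) eqn:E; cbn [negb].
    + rewrite IH. destruct (monomial_eq_dec w' w); auto.
      rewrite coeff_cons. destruct (has_monomial w' (a,b,c)) eqn:E'; auto.
      apply has_monomial_true in E. apply has_monomial_true in E'. congruence.
    + rewrite !coeff_cons, IH. destruct (monomial_eq_dec w' w).
      * subst. rewrite E. reflexivity.
      * reflexivity.
Qed.

Variable H : Hilbert.
Variable T1 : Fin.t n1 -> op H.
Variable T2 : Fin.t n2 -> op H.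

Lemma peval_filter (P : term n1 n2 -> bool) p h :
  peval p T1 T2 h =
  hadd (peval (filter P p) T1 T2 h) (peval (filter (fun t => negb (P t)) p) T1 T2 h).
Proof.
  induction p as [|[[a b] c] p IH]; cbn [filter].
  - unfold peval; simpl. rewrite hadd_0. reflexivity.
  - destruct (P (a, b, c)); cbn [negb filter]; rewrite !peval_cons, IH.
    + apply hadd_assoc.
    + rewrite !hadd_assoc. f_equal. apply hadd_comm.
Qed.

Lemma peval_single_monomial w p h :
  (forall t, In t p -> has_monomial w t = true) ->
  peval p T1 T2 h = hscal (coeff p w) (monomial H n1 n2 T1 T2 (fst w) (snd w) h).
Proof.
  induction p as [|[[a b] c] p IH]; intro Hin.
  - unfold peval, coeff; simpl. rewrite hscal_C0. reflexivity.
  - rewrite peval_cons, coeff_cons.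
    assert (E := Hin _ (or_introl eq_refl)). rewrite E.
    apply has_monomial_true in E. subst w. simpl.
    rewrite IH by (intros; apply Hin; right; auto). simpl.
    rewrite hscal_distr_s. reflexivity.
Qed.

Lemma peval_eq0_of_coeff0 p h : (forall w, coeff p w = C0) -> peval p T1 T2 h = hzero.
Proof.
  induction p as [p IH] using (induction_ltof1 _ (@length _)). intro Hc.
  destruct p as [|[[a b] c] p']; [reflexivity|].
  (* The terms with the monomial [X_a Y_b] add up to [coeff p (a, b) . X_a Y_b = 0]. *)
  rewrite (peval_filter (has_monomial (a, b))), (peval_single_monomial (a, b))
    by (intros t Ht; apply filter_In in Ht; tauto).
  rewrite coeff_filter_same, Hc, hscal_C0, hadd_0.
  apply IH.
  - unfold ltof. cbn [filter].
    rewrite (proj2 (has_monomial_true (a, b) a b c) eq_refl). cbn [negb length].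
    pose proof (filter_length_le (fun t => negb (has_monomial (a, b) t)) p'). lia.
  - intro w'. rewrite coeff_filter_other. destruct (monomial_eq_dec w' (a, b)); auto.
Qed.

End Coefficients.

(** * Hilbert space constructions *)

Lemma abs_le_sqrt a b : Rabs a <= sqrt (a*a + b*b).
Proof.
  rewrite <- sqrt_Rsqr_abs. apply sqrt_le_1_alt. unfold Rsqr. nra.
Qed.

Lemma sqrt_le_abs_sum a b : sqrt (a*a + b*b) <= Rabs a + Rabs b.
Proof.
  pose proof (Rabs_pos a). pose proof (Rabs_pos b).
  rewrite <- (sqrt_square (Rabs a + Rabs b)) by lra.
  apply sqrt_le_1_alt.
  assert (Rabs a * Rabs a = a * a) by (rewrite <- Rabs_mult; apply Rabs_right; nra).
  assert (Rabs b * Rabs b = b * b) by (rewrite <- Rabs_mult; apply Rabs_right; nra).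
  nra.
Qed.

Lemma sqrt_le_l A B : 0 <= A -> 0 <= B -> sqrt A <= sqrt (A + B).
Proof. intros. apply sqrt_le_1_alt. lra. Qed.

Lemma sqrt_sum_le A B : 0 <= A -> 0 <= B -> sqrt (A + B) <= sqrt A + sqrt B.
Proof.
  intros. pose proof (sqrt_pos A). pose proof (sqrt_pos B).
  rewrite <- (sqrt_square (sqrt A + sqrt B)) by lra.
  apply sqrt_le_1_alt.
  pose proof (sqrt_sqrt A H). pose proof (sqrt_sqrt B H0). nra.
Qed.

Definition Hunit : Hilbert.
Proof.
  refine (@Build_Hilbert unit tt (fun _ _ => tt) (fun _ => tt) (fun _ _ => tt) (fun _ _ => C0)
    _ _ _ _ _ _ _ _ _ _ _ _ _ _);
  intros; repeat match goal with u : unit |- _ => destruct u end; try reflexivity; try Csolve.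
  all: try (simpl; lra).
  all: try (exists tt; intros eps Heps; exists 0%nat; intros; simpl; rewrite sqrt_0; lra).
Defined.

Lemma hnorm_Hunit (x : Hunit) : hnorm x = 0.
Proof. unfold hnorm. simpl. apply sqrt_0. Qed.

Lemma row_contraction_Hunit n : row_contraction n (fun _ (_ : Hunit) => tt).
Proof.
  split.
  - intro i. split; [reflexivity|]. split; [reflexivity|]. exists 0. intro x.
    rewrite !hnorm_Hunit. lra.
  - exists (fun _ _ => tt). split.
    + intros i x y. reflexivity.
    + intro h. simpl. lra.
Qed.

Definition Copp (a : C) : C := mkC (- re a) (- im a).

Lemma HC_norm_sq a b :
  re (Cmul (Cadd a (Copp b)) (Cconj (Cadd a (Copp b)))) =
  (re a - re b) * (re a - re b) + (im a - im b) * (im a - im b).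
Proof. destruct a, b; simpl; ring. Qed.

Lemma HC_complete : forall u : nat -> C,
    (forall eps, 0 < eps -> exists N, forall m n, (N <= m)%nat -> (N <= n)%nat ->
       sqrt (re (Cmul (Cadd (u m) (Copp (u n))) (Cconj (Cadd (u m) (Copp (u n)))))) < eps) ->
    exists l, forall eps, 0 < eps -> exists N, forall n, (N <= n)%nat ->
       sqrt (re (Cmul (Cadd (u n) (Copp l)) (Cconj (Cadd (u n) (Copp l))))) < eps.
Proof.
  intros u Hc.
  assert (Cr : Cauchy_crit (fun n => re (u n))).
  { intros eps He. destruct (Hc eps He) as [N HN]. exists N. intros n m Hn Hm.
    specialize (HN n m Hn Hm). rewrite HC_norm_sq in HN. unfold R_dist.
    pose proof (abs_le_sqrt (re (u n) - re (u m)) (im (u n) - im (u m))). lra. }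
  assert (Ci : Cauchy_crit (fun n => im (u n))).
  { intros eps He. destruct (Hc eps He) as [N HN]. exists N. intros n m Hn Hm.
    specialize (HN n m Hn Hm). rewrite HC_norm_sq in HN. unfold R_dist.
    pose proof (abs_le_sqrt (im (u n) - im (u m)) (re (u n) - re (u m))) as P.
    rewrite Rplus_comm in P. lra. }
  destruct (R_complete _ Cr) as [lr Hr]. destruct (R_complete _ Ci) as [li Hi].
  exists (mkC lr li). intros eps He.
  destruct (Hr (eps/2)) as [N1 HN1]; [lra|]. destruct (Hi (eps/2)) as [N2 HN2]; [lra|].
  exists (max N1 N2). intros n Hn. rewrite HC_norm_sq. simpl.
  specialize (HN1 n ltac:(lia)). specialize (HN2 n ltac:(lia)). unfold R_dist in *.
  pose proof (sqrt_le_abs_sum (re (u n) - lr) (im (u n) - li)). lra.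
Qed.

Definition HC : Hilbert.
Proof.
  refine (@Build_Hilbert C C0 Cadd Copp Cmul (fun a b => Cmul a (Cconj b))
    _ _ _ _ _ _ _ _ _ _ _ _ _ HC_complete); unfold Copp;
  intros; try Csolve.
  - destruct x; simpl; nra.
  - destruct x as [a b]. unfold C0, Cmul, Cconj in H. simpl in H. injection H; intros.
    unfold C0. f_equal; nra.
Defined.

Definition hdist2 {H : Hilbert} (x y : H) : R := re (hinner (hadd x (hopp y)) (hadd x (hopp y))).

Section Prod.
Variables K H : Hilbert.

Lemma Hprod_complete : forall u : nat -> K * H,
    (forall eps, 0 < eps -> exists N, forall m n, (N <= m)%nat -> (N <= n)%nat ->
       sqrt (hdist2 (fst (u m)) (fst (u n)) + hdist2 (snd (u m)) (snd (u n))) < eps) ->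
    exists l : K * H, forall eps, 0 < eps -> exists N, forall n, (N <= n)%nat ->
       sqrt (hdist2 (fst (u n)) (fst l) + hdist2 (snd (u n)) (snd l)) < eps.
Proof.
  unfold hdist2. intros u Hc.
  destruct (hcomplete K (fun n => fst (u n))) as [l1 H1].
  { intros eps He. destruct (Hc eps He) as [N HN]. exists N. intros m n Hm Hn.
    specialize (HN m n Hm Hn). simpl in HN.
    eapply Rle_lt_trans; [|exact HN]. apply sqrt_le_l; apply hinner_pos. }
  destruct (hcomplete H (fun n => snd (u n))) as [l2 H2].
  { intros eps He. destruct (Hc eps He) as [N HN]. exists N. intros m n Hm Hn.
    specialize (HN m n Hm Hn). simpl in HN.
    eapply Rle_lt_trans; [|exact HN]. rewrite Rplus_comm. apply sqrt_le_l; apply hinner_pos. }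
  exists (l1, l2). intros eps He.
  destruct (H1 (eps/2)) as [N1 HN1]; [lra|]. destruct (H2 (eps/2)) as [N2 HN2]; [lra|].
  exists (max N1 N2). intros n Hn. simpl.
  specialize (HN1 n ltac:(lia)). specialize (HN2 n ltac:(lia)).
  eapply Rle_lt_trans; [apply sqrt_sum_le; apply hinner_pos|]. lra.
Qed.

Definition Hprod : Hilbert.
Proof.
  refine (@Build_Hilbert (K * H) (hzero, hzero)
    (fun x y => (hadd (fst x) (fst y), hadd (snd x) (snd y)))
    (fun x => (hopp (fst x), hopp (snd x)))
    (fun a x => (hscal a (fst x), hscal a (snd x)))
    (fun x y => Cadd (hinner (fst x) (fst y)) (hinner (snd x) (snd y)))
    _ _ _ _ _ _ _ _ _ _ _ _ _ Hprod_complete); intros.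
  - simpl. f_equal; apply hadd_assoc.
  - simpl. f_equal; apply hadd_comm.
  - destruct x; simpl. rewrite !hadd_0. reflexivity.
  - simpl. f_equal; apply hadd_opp.
  - destruct x; simpl. rewrite !hscal_1. reflexivity.
  - simpl. f_equal; apply hscal_assoc.
  - simpl. f_equal; apply hscal_distr_v.
  - simpl. f_equal; apply hscal_distr_s.
  - simpl. rewrite !hinner_add_l. gen_inner. intros; Csolve.
  - simpl. rewrite !hinner_scal_l. gen_inner. intros; Csolve.
  - simpl. rewrite (hinner_conj K (fst x)), (hinner_conj H (snd x)). gen_inner. intros; Csolve.
  - simpl. pose proof (hinner_pos K (fst x)). pose proof (hinner_pos H (snd x)). lra.
  - destruct x as [a b]. simpl in *.
    pose proof (hinner_pos K a). pose proof (hinner_pos H b).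
    pose proof (im_inner_self K a). pose proof (im_inner_self H b).
    assert (re (hinner a a) = 0 /\ re (hinner b b) = 0) as [E1 E2].
    { unfold C0, Cadd in H0. injection H0; intros. lra. }
    f_equal; apply hinner_def;
      [destruct (hinner a a) | destruct (hinner b b)]; simpl in *; subst; reflexivity.
Defined.

Lemma op_le_Hprod (f : op K) (g : op H) :
  op_le f (fun a => a) -> op_le g (fun a => a) ->
  op_le (fun x : Hprod => (f (fst x), g (snd x))) (fun x => x).
Proof.
  intros Hf Hg x. destruct (Hf (fst x)) as [I1 R1], (Hg (snd x)) as [I2 R2].
  simpl. split; [rewrite I1, I2|]; lra.
Qed.

End Prod.

Fixpoint Hpow (n : nat) (H : Hilbert) : Hilbert :=
  match n with O => Hunit | S m => Hprod H (Hpow m H) end.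

Fixpoint get {H : Hilbert} {n : nat} (i : Fin.t n) : Hpow n H -> H :=
  match i in Fin.t n return Hpow n H -> H with
  | Fin.F1 => fun v => fst v
  | Fin.FS j => fun v => get j (snd v)
  end.

Fixpoint put {H : Hilbert} {n : nat} (i : Fin.t n) : H -> Hpow n H :=
  match i in Fin.t n return H -> Hpow n H with
  | @Fin.F1 m => fun x => (x, @hzero (Hpow m H)) : Hpow (S m) H
  | @Fin.FS m j => fun x => (@hzero H, put j x) : Hpow (S m) H
  end.

Fixpoint pmap {H H' : Hilbert} (f : H -> H') (n : nat) : Hpow n H -> Hpow n H' :=
  match n return Hpow n H -> Hpow n H' with
  | O => fun _ => tt
  | S m => fun v => (f (fst v), pmap f m (snd v))
  end.

Lemma vsum_Hprod (K H : Hilbert) m (f : Fin.t m -> K) (g : Fin.t m -> H) :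
  @fin_vsum (Hprod K H) m (fun i => (f i, g i)) = (fin_vsum m f, fin_vsum m g).
Proof.
  revert f g; induction m; intros f g; simpl; auto.
  rewrite (IHm (fun i => f (Fin.FS i)) (fun i => g (Fin.FS i))). reflexivity.
Qed.

Lemma vsum_zero (H : Hilbert) m : @fin_vsum H m (fun _ => hzero) = hzero.
Proof. induction m; simpl; auto. rewrite IHm, hadd_0. reflexivity. Qed.

Section PowLemmas.
Variable H : Hilbert.

Lemma get_zero n (i : Fin.t n) : get i (@hzero (Hpow n H)) = hzero.
Proof. induction i; simpl; auto. Qed.

Lemma get_put_same n (i : Fin.t n) (x : H) : get i (put i x) = x.
Proof. induction i; simpl; auto. Qed.

Lemma get_put_diff n (i j : Fin.t n) (x : H) : i <> j -> get i (put j x) = hzero.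
Proof.
  revert j. induction i as [m|m i IH]; intro j.
  - refine (Fin.caseS' j (fun j => Fin.F1 <> j -> get Fin.F1 (put j x) = hzero) _ _).
    + intro C; exfalso; apply C; reflexivity.
    + intros p _. reflexivity.
  - refine (Fin.caseS' j (fun j => Fin.FS i <> j -> get (Fin.FS i) (put j x) = hzero) _ _).
    + intros _. simpl. apply get_zero.
    + intros p Hp. simpl. apply IH. intro E; apply Hp; subst; reflexivity.
Qed.

Lemma put_add n (i : Fin.t n) (x y : H) : put i (hadd x y) = hadd (put i x) (put i y).
Proof. induction i; simpl; rewrite ?IHi, hadd_0; reflexivity. Qed.

Lemma put_scal n (i : Fin.t n) a (x : H) : put i (hscal a x) = hscal a (put i x).
Proof. induction i; simpl; rewrite ?IHi, hscal_zero; reflexivity. Qed.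

Lemma inner_put_l n (i : Fin.t n) (x : H) v : hinner (put i x) v = hinner x (get i v).
Proof.
  induction i; simpl.
  - rewrite inner_0l, Cadd_0r. reflexivity.
  - rewrite inner_0l, Cadd_0l, IHi. reflexivity.
Qed.

Lemma re_inner_get_le n (i : Fin.t n) (v : Hpow n H) :
  re (hinner (get i v) (get i v)) <= re (hinner v v).
Proof.
  induction i; simpl.
  - apply Rle_trans with (re (hinner (fst v) (fst v)) + 0);
      [lra|apply Rplus_le_compat_l, hinner_pos].
  - apply Rle_trans with (0 + re (hinner (snd v) (snd v))); [rewrite Rplus_0_l; apply IHi|].
    apply Rplus_le_compat_r, hinner_pos.
Qed.

Lemma vsum_put_get n (v : Hpow n H) : fin_vsum n (fun i => put i (get i v)) = v.
Proof.
  induction n; simpl.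
  - destruct v. reflexivity.
  - rewrite (vsum_Hprod H (Hpow n H) n (fun _ => hzero) (fun i => put i (get i (snd v)))).
    rewrite vsum_zero, IHn. destruct v. simpl. rewrite hadd_0r, hadd_0. reflexivity.
Qed.

Lemma pmap_le_id (f : H -> H) n :
  op_le f (fun a => a) -> op_le (pmap f n) (fun v : Hpow n H => v).
Proof.
  intro Hf. induction n as [|n IHn].
  - intro v. simpl. lra.
  - exact (op_le_Hprod _ _ _ _ Hf IHn).
Qed.

Lemma get_add n (i : Fin.t n) (v w : Hpow n H) : get i (hadd v w) = hadd (get i v) (get i w).
Proof. induction i; simpl; auto. Qed.

Lemma get_scal n (i : Fin.t n) a (v : Hpow n H) : get i (hscal a v) = hscal a (get i v).
Proof. induction i; simpl; auto. Qed.

End PowLemmas.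

Section PmapLemmas.
Variables H H' H'' : Hilbert.

Lemma get_pmap (f : H -> H') n (i : Fin.t n) v : get i (pmap f n v) = f (get i v).
Proof. induction i; simpl; auto. Qed.

Lemma pmap_zero (f : H -> H') n : f hzero = hzero -> pmap f n hzero = hzero.
Proof. intro E. induction n; simpl; auto. rewrite E, IHn. reflexivity. Qed.

Lemma pmap_put (f : H -> H') n (i : Fin.t n) x :
  f hzero = hzero -> pmap f n (put i x) = put i (f x).
Proof.
  intro E. induction i; simpl.
  - rewrite pmap_zero; auto.
  - rewrite E, IHi. reflexivity.
Qed.

Lemma pmap_add (f : H -> H') n :
  (forall x y, f (hadd x y) = hadd (f x) (f y)) ->
  forall v w, pmap f n (hadd v w) = hadd (pmap f n v) (pmap f n w).
Proof. intros Hf. induction n; intros v w; simpl; auto. rewrite Hf, IHn. reflexivity. Qed.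

Lemma pmap_scal (f : H -> H') n :
  (forall a x, f (hscal a x) = hscal a (f x)) ->
  forall a v, pmap f n (hscal a v) = hscal a (pmap f n v).
Proof. intros Hf. induction n; intros a v; simpl; auto. rewrite Hf, IHn. reflexivity. Qed.

Lemma inner_pmap_adj (f : H -> H') (g : H' -> H) n :
  (forall a b, hinner (f a) b = hinner a (g b)) ->
  forall v w, hinner (pmap f n v) w = hinner v (pmap g n w).
Proof. intros Hf. induction n; intros v w; simpl; auto. rewrite Hf, IHn. reflexivity. Qed.

Lemma pmap_comp (f : H' -> H'') (g : H -> H') n v :
  pmap f n (pmap g n v) = pmap (fun a => f (g a)) n v.
Proof. induction n; simpl; auto. rewrite IHn. reflexivity. Qed.

Lemma pmap_ext (f g : H -> H') n v : (forall a, f a = g a) -> pmap f n v = pmap g n v.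
Proof. intro E. induction n; simpl; auto. rewrite E, IHn. reflexivity. Qed.

Lemma vsum_pmap m (f : Fin.t m -> H -> H') n v :
  fin_vsum m (fun j => pmap (f j) n v) = pmap (fun a => fin_vsum m (fun j => f j a)) n v.
Proof.
  induction n; simpl.
  - destruct (fin_vsum m _). reflexivity.
  - rewrite (vsum_Hprod H' (Hpow n H') m (fun j => f j (fst v)) (fun j => pmap (f j) n (snd v))).
    rewrite IHn. reflexivity.
Qed.

End PmapLemmas.

Lemma pmap_id (H : Hilbert) n (v : Hpow n H) : pmap (fun a => a) n v = v.
Proof. induction n; simpl. destruct v; auto. rewrite IHn. destruct v; auto. Qed.

(** * Truncated Fock spaces *)

Section FockSpace.
Variable B : Hilbert.
Variable n : nat.

(* [Fock d] is [B] tensored with the full Fock space over [C^n] truncated at depth [d],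
   built recursively as [B (+) (Fock (d-1))^n]; [coord al] is its [B]-component at the
   word [al] (zero when [al] is longer than [d]), and [vacuum d w] is [w] at the empty
   word. *)
Fixpoint Fock (d : nat) : Hilbert :=
  match d with O => B | S d' => Hprod B (Hpow n (Fock d')) end.

Fixpoint trunc (d : nat) : Fock (S d) -> Fock d :=
  match d return Fock (S d) -> Fock d with
  | O => fun x => fst x
  | S d' => fun x => (fst x, pmap (trunc d') n (snd x)) : Fock (S d')
  end.

Fixpoint extend (d : nat) : Fock d -> Fock (S d) :=
  match d return Fock d -> Fock (S d) with
  | O => fun k => (k, @hzero (Hpow n B)) : Fock 1
  | S d' => fun x => (fst x, pmap (extend d') n (snd x)) : Fock (S (S d'))
  end.

(* The creation operator [e_al |-> e_(i :: al)], which discards the words of length [d]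
   ([trunc]); its adjoint [shift_adj] is the annihilation operator, and
   [sum_i shift_i shift_adj_i] is the projection onto the nonempty words. *)
Definition shift (d : nat) (i : Fin.t n) : Fock d -> Fock d :=
  match d return Fock d -> Fock d with
  | O => fun _ => hzero
  | S d' => fun x => (@hzero B, put i (trunc d' x)) : Fock (S d')
  end.

Definition shift_adj (d : nat) (i : Fin.t n) : Fock d -> Fock d :=
  match d return Fock d -> Fock d with
  | O => fun _ => hzero
  | S d' => fun x => extend d' (get i (snd x))
  end.

Fixpoint lift (d : nat) (A : B -> B) : Fock d -> Fock d :=
  match d return Fock d -> Fock d with
  | O => A
  | S d' => fun x => (A (fst x), pmap (lift d' A) n (snd x)) : Fock (S d')
  end.

Definition top (d : nat) : Fock d -> B :=
  match d return Fock d -> B with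
  | O => fun x => x
  | S _ => fun x => fst x
  end.

Fixpoint coord (al : word n) (d : nat) {struct al} : Fock d -> B :=
  match al with
  | nil => top d
  | i :: al' => match d return Fock d -> B with
               | O => fun _ => hzero
               | S d' => fun x => coord al' d' (get i (snd x))
               end
  end.

Definition vacuum (d : nat) (w : B) : Fock d :=
  match d return Fock d with
  | O => w
  | S d' => (w, @hzero (Hpow n (Fock d'))) : Fock (S d')
  end.

Lemma trunc_add d x y : trunc d (hadd x y) = hadd (trunc d x) (trunc d y).
Proof.
  revert x y; induction d; intros x y; [reflexivity|].
  simpl. rewrite (pmap_add _ _ (trunc d) n IHd). reflexivity.
Qed.

Lemma trunc_scal d a x : trunc d (hscal a x) = hscal a (trunc d x).
Proof.
  revert a x; induction d; intros a x; [reflexivity|].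
  simpl. rewrite (pmap_scal _ _ (trunc d) n IHd). reflexivity.
Qed.

Lemma trunc_extend d x : trunc d (extend d x) = x.
Proof.
  induction d; [reflexivity|]. simpl. rewrite pmap_comp.
  rewrite (pmap_ext _ _ _ (fun a => a)) by auto. rewrite pmap_id. destruct x; reflexivity.
Qed.

Lemma inner_trunc d x z : hinner (trunc d x) z = hinner x (extend d z).
Proof.
  revert x z; induction d; intros x z; simpl.
  - rewrite inner_0r, Cadd_0r. reflexivity.
  - rewrite (inner_pmap_adj _ _ (trunc d) (extend d) n IHd). reflexivity.
Qed.

Lemma shift_add d i x y : shift d i (hadd x y) = hadd (shift d i x) (shift d i y).
Proof.
  destruct d; unfold shift; cbv beta iota.
  - rewrite hadd_0. reflexivity.
  - rewrite trunc_add, put_add. simpl. rewrite hadd_0. reflexivity.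
Qed.

Lemma shift_scal d i a x : shift d i (hscal a x) = hscal a (shift d i x).
Proof.
  destruct d; unfold shift; cbv beta iota.
  - rewrite hscal_zero. reflexivity.
  - rewrite trunc_scal, put_scal. simpl. rewrite hscal_zero. reflexivity.
Qed.

Lemma shift_zero d i : shift d i hzero = hzero.
Proof. apply homog_zero. intros a x. apply shift_scal. Qed.

Lemma shift_adjoint d i : is_adjoint (shift d i) (shift_adj d i).
Proof.
  intros x y. destruct d; unfold shift, shift_adj; cbv beta iota.
  - rewrite inner_0l, inner_0r. reflexivity.
  - simpl. rewrite inner_0l, Cadd_0l, inner_put_l, inner_trunc. reflexivity.
Qed.

Lemma shift_row_le d :
  op_le (fun h => fin_vsum n (fun i => shift d i (shift_adj d i h))) (fun h => h).
Proof.
  intro h. destruct d as [|d].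
  - simpl. rewrite vsum_zero, hopp_zero, hadd_0r. split; [apply im_inner_self|apply hinner_pos].
  - assert (E : fin_vsum n (fun i => shift (S d) i (shift_adj (S d) i h)) =
                ((@hzero B, snd h) : Fock (S d))).
    { transitivity (@fin_vsum (Fock (S d)) n
                      (fun i => ((@hzero B, put i (get i (snd h))) : Fock (S d)))).
      - f_equal. apply functional_extensionality. intro i. simpl. rewrite trunc_extend.
        reflexivity.
      - rewrite (vsum_Hprod B (Hpow n (Fock d))), vsum_zero, vsum_put_get. reflexivity. }
    rewrite E. destruct h as [k v]. simpl.
    rewrite hopp_zero, hadd_0r, hadd_opp, inner_0l. simpl. rewrite !Rplus_0_r.
    split; [apply im_inner_self|apply hinner_pos].
Qed.

Lemma row_contraction_shift d : row_contraction n (shift d).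
Proof.
  apply (row_contraction_of_adjoint _ _ _ (shift_adj d)).
  - apply shift_adjoint.
  - apply shift_row_le.
  - intros i x y. apply shift_add.
  - intros i a x. apply shift_scal.
Qed.

Lemma lift_zero d A : A hzero = hzero -> lift d A hzero = hzero.
Proof.
  intro E. induction d; simpl; auto. rewrite E, pmap_zero; auto.
Qed.

Lemma lift_add d A : (forall x y, A (hadd x y) = hadd (A x) (A y)) ->
  forall x y, lift d A (hadd x y) = hadd (lift d A x) (lift d A y).
Proof.
  intro HA. induction d; intros x y; simpl; auto.
  rewrite HA, (pmap_add _ _ (lift d A) n IHd). reflexivity.
Qed.

Lemma lift_scal d A : (forall a x, A (hscal a x) = hscal a (A x)) ->
  forall a x, lift d A (hscal a x) = hscal a (lift d A x).
Proof.
  intro HA. induction d; intros a x; simpl; auto.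
  rewrite HA, (pmap_scal _ _ (lift d A) n IHd). reflexivity.
Qed.

Lemma lift_adj d A A' : (forall a b, hinner (A a) b = hinner a (A' b)) ->
  is_adjoint (lift d A) (lift d A').
Proof.
  intro HA. induction d; intros x y; simpl; auto.
  rewrite HA, (inner_pmap_adj _ _ (lift d A) (lift d A') n IHd). reflexivity.
Qed.

Lemma lift_comp d A A' x : lift d A (lift d A' x) = lift d (fun k => A (A' k)) x.
Proof.
  revert x; induction d; intro x; simpl; auto.
  rewrite pmap_comp. f_equal. apply pmap_ext. auto.
Qed.

Lemma vsum_lift m d (A : Fin.t m -> B -> B) x :
  fin_vsum m (fun j => lift d (A j) x) = lift d (fun k => fin_vsum m (fun j => A j k)) x.
Proof.
  revert x; induction d; intro x; [reflexivity|].
  change (Fock (S d)) with (Hprod B (Hpow n (Fock d))). simpl.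
  rewrite (vsum_Hprod B (Hpow n (Fock d)) m (fun j => A j (fst x))
                     (fun j => pmap (lift d (A j)) n (snd x))).
  rewrite vsum_pmap. f_equal. apply pmap_ext. auto.
Qed.

Lemma lift_le_id d P : op_le P (fun a => a) -> op_le (lift d P) (fun h => h).
Proof.
  intro HP. induction d as [|d IHd]; [exact HP|].
  exact (op_le_Hprod _ _ _ _ HP (pmap_le_id _ _ n IHd)).
Qed.

Lemma row_contraction_lift m d (X : Fin.t m -> op B) : row_contraction m X ->
  row_contraction m (fun j => lift d (X j)).
Proof.
  intros [BL [A [Hadj Hle]]].
  apply (row_contraction_of_adjoint _ _ _ (fun j => lift d (A j))).
  - intro i. apply lift_adj, Hadj.
  - intro h. rewrite (functional_extensionality _ _ (fun i => lift_comp d (X i) (A i) h)).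
    rewrite (vsum_lift m d (fun j k => X j (A j k))).
    apply (lift_le_id d (fun k => fin_vsum m (fun j => X j (A j k)))), Hle.
  - intros i x y. apply lift_add, (BL i).
  - intros i a x. apply lift_scal, (BL i).
Qed.

Lemma trunc_lift d A x : trunc d (lift (S d) A x) = lift d A (trunc d x).
Proof.
  revert x; induction d; intro x; [reflexivity|].
  simpl. rewrite !pmap_comp. f_equal. apply pmap_ext. auto.
Qed.

Lemma shift_lift_comm d i A x : A hzero = hzero -> shift d i (lift d A x) = lift d A (shift d i x).
Proof.
  intro E. destruct d.
  - simpl. auto.
  - unfold shift; cbv beta iota. rewrite trunc_lift. simpl.
    rewrite E, pmap_put by (apply lift_zero; auto). reflexivity.
Qed.

Lemma coord_zero al d : coord al d hzero = hzero.
Proof.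
  revert d; induction al; intro d; destruct d; simpl; auto.
  rewrite get_zero. apply IHal.
Qed.

Lemma coord_add al d x y : coord al d (hadd x y) = hadd (coord al d x) (coord al d y).
Proof.
  revert d x y; induction al; intros d x y; destruct d; simpl; auto.
  - rewrite hadd_0. reflexivity.
  - rewrite get_add. apply IHal.
Qed.

Lemma coord_scal al d a x : coord al d (hscal a x) = hscal a (coord al d x).
Proof.
  revert d x; induction al; intros d x; destruct d; simpl; auto.
  - rewrite hscal_zero. reflexivity.
  - rewrite get_scal. apply IHal.
Qed.

Lemma coord_trunc al d x : (length al <= d)%nat -> coord al d (trunc d x) = coord al (S d) x.
Proof.
  revert al x; induction d; intros al x Hl.
  - destruct al; simpl in *; [reflexivity|lia].
  - destruct al as [|i al]; [reflexivity|]. simpl in *.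
    rewrite get_pmap. apply IHd. lia.
Qed.

Lemma coord_nil_vacuum d w : coord nil d (vacuum d w) = w.
Proof. destruct d; reflexivity. Qed.

Lemma coord_cons_vacuum i al d w : coord (i :: al) d (vacuum d w) = hzero.
Proof. destruct d; simpl; auto. rewrite get_zero. apply coord_zero. Qed.

Lemma coord_shift_vacuum d w : forall ga al, (length al <= d)%nat ->
  coord al d (eval_word (shift d) ga (vacuum d w)) = if word_eq_dec ga al then w else hzero.
Proof.
  induction ga as [|j ga IH]; intros al Hl; cbn [eval_word fold_right].
  - destruct al as [|i al].
    + rewrite coord_nil_vacuum. destruct (@word_eq_dec n nil nil); congruence.
    + rewrite coord_cons_vacuum. destruct (@word_eq_dec n nil (i :: al)); congruence.
  - destruct d as [|d].
    + rewrite coord_zero. destruct al; simpl in Hl; [|lia].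
      destruct (word_eq_dec (j :: ga) nil); congruence.
    + destruct al as [|i al].
      * simpl. destruct (word_eq_dec (j :: ga) nil); congruence.
      * cbn [coord eval_word fold_right shift snd]. destruct (Fin.eq_dec i j) as [Eij|Nij].
        -- subst i. rewrite get_put_same. simpl in Hl. rewrite coord_trunc by lia.
           rewrite IH by lia.
           destruct (word_eq_dec ga al), (word_eq_dec (j :: ga) (j :: al)); congruence.
        -- rewrite get_put_diff by auto. rewrite coord_zero.
           destruct (word_eq_dec (j :: ga) (i :: al)); congruence.
Qed.

Lemma lift_vacuum d A w : A hzero = hzero -> lift d A (vacuum d w) = vacuum d (A w).
Proof.
  intro E. destruct d; simpl; auto. rewrite pmap_zero; auto. apply lift_zero; auto.
Qed.

Lemma eval_word_lift_vacuum m d (A : Fin.t m -> op B) w y :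
  (forall j, A j hzero = hzero) ->
  eval_word (fun j => lift d (A j)) y (vacuum d w) = vacuum d (eval_word A y w).
Proof.
  intro E. induction y; [reflexivity|].
  transitivity (lift d (A a) (eval_word (fun j => lift d (A j)) y (vacuum d w))); [reflexivity|].
  rewrite IHy. apply (lift_vacuum d (A a) (eval_word A y w)). auto.
Qed.

Lemma re_inner_coord_le al d x : re (hinner (coord al d x) (coord al d x)) <= re (hinner x x).
Proof.
  revert d x; induction al; intros d x; destruct d; simpl.
  - lra.
  - apply Rle_trans with (re (hinner (fst x) (fst x)) + 0);
      [lra|apply Rplus_le_compat_l, hinner_pos].
  - rewrite inner_0l. apply hinner_pos.
  - eapply Rle_trans; [apply IHal|]. eapply Rle_trans; [apply re_inner_get_le|].
    apply Rle_trans with (0 + re (hinner (snd x) (snd x))); [lra|].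
    apply Rplus_le_compat_r, hinner_pos.
Qed.

Lemma re_inner_vacuum d w : re (hinner (vacuum d w) (vacuum d w)) = re (hinner w w).
Proof. destruct d; simpl; auto. rewrite inner_0l. simpl. ring. Qed.

End FockSpace.

Section FockModel.
Variables n1 n2 d1 d2 : nat.

(* The model detecting the coefficients of the monomials [X_a Y_b] with [|a| <= d1] and
   [|b| <= d2]: creation operators on the two tensor factors of (Fock space over [C^n1])
   (x) (Fock space over [C^n2]), truncated at depths [d1] and [d2] so that only finite
   products of Hilbert spaces are needed. *)
Definition model_K := Fock HC n2 d2.
Definition model_H := Fock model_K n1 d1.
Definition model_X (i : Fin.t n1) : op model_H := shift model_K n1 d1 i.
Definition model_Y (j : Fin.t n2) : op model_H := lift model_K n1 d1 (shift HC n2 d2 j).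
Definition model_vacuum : model_H := vacuum model_K n1 d1 (vacuum HC n2 d2 C1).
Definition model_coord (a : word n1) (b : word n2) (z : model_H) : C :=
  coord HC n2 b d2 (coord model_K n1 a d1 z).

Lemma model_in_Pn : in_Pn n1 n2 model_X model_Y.
Proof.
  split; [apply row_contraction_shift|]. split.
  - apply row_contraction_lift, row_contraction_shift.
  - intros i j h. apply shift_lift_comm, shift_zero.
Qed.

Lemma model_coord_peval_vacuum (p : ncpoly n1 n2) a b :
  (length a <= d1)%nat -> (length b <= d2)%nat ->
  model_coord a b (peval p model_X model_Y model_vacuum) = coeff p (a, b).
Proof.
  intros Ha Hb. unfold model_coord.
  induction p as [|[[x y] c] p IH].
  - unfold peval. simpl fold_right. rewrite !coord_zero. reflexivity.
  - rewrite peval_cons, !coord_add, !coord_scal, IH, coeff_cons.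
    unfold monomial, model_vacuum, model_Y, model_X.
    rewrite (eval_word_lift_vacuum model_K n1 n2 d1 (shift HC n2 d2)) by (intro; apply shift_zero).
    rewrite coord_shift_vacuum by exact Ha.
    unfold has_monomial. simpl fst. simpl snd.
    generalize (coeff p (a, b)); intro.
    destruct (word_eq_dec x a).
    + rewrite coord_shift_vacuum by exact Hb. destruct (word_eq_dec y b); simpl; Csolve.
    + rewrite coord_zero. simpl. Csolve.
Qed.

Lemma hnorm_model_vacuum : hnorm model_vacuum = 1.
Proof.
  unfold hnorm, model_vacuum, model_H. rewrite re_inner_vacuum.
  unfold model_K. rewrite re_inner_vacuum.
  simpl. replace (1 * 1 - 0 * - 0) with 1 by ring. apply sqrt_1.
Qed.

Lemma Cmod_model_coord_le a b (z : model_H) : Cmod (model_coord a b z) <= hnorm z.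
Proof.
  set (c := model_coord a b z).
  assert (E : Cmod c = hnorm (c : HC)).
  { unfold Cmod, hnorm. f_equal. destruct c; simpl. ring. }
  rewrite E. unfold hnorm, c, model_coord. apply sqrt_le_1_alt.
  eapply Rle_trans; apply re_inner_coord_le.
Qed.

End FockModel.

(** * The universal norm *)

Section UniversalNorm.
Variables n1 n2 : nat.

Lemma in_Pn_facts (H : Hilbert) (T1 : Fin.t n1 -> op H) (T2 : Fin.t n2 -> op H) :
  in_Pn n1 n2 T1 T2 ->
  lin H T1 /\ lin H T2 /\ (forall i h, hnorm (T1 i h) <= hnorm h) /\
  (forall i h, hnorm (T2 i h) <= hnorm h) /\ (forall i j h, T1 i (T2 j h) = T2 j (T1 i h)).
Proof.
  intros [R1 [R2 Cm]].
  assert (K1 := row_contraction_contractive _ _ _ R1).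
  assert (K2 := row_contraction_contractive _ _ _ R2).
  destruct R1 as [B1 _], R2 as [B2 _].
  refine (conj _ (conj _ (conj K1 (conj K2 Cm)))); intro i;
    [destruct (B1 i) as [A [S _]] | destruct (B2 i) as [A [S _]]]; exact (conj A S).
Qed.

Lemma peval_opnorm_exists (H : Hilbert) (T1 : Fin.t n1 -> op H) (T2 : Fin.t n2 -> op H) p :
  in_Pn n1 n2 T1 T2 -> exists r, is_opnorm (peval p T1 T2) r.
Proof.
  intro HP. destruct (in_Pn_facts _ _ _ HP) as [_ [_ [K1 [K2 _]]]].
  apply (opnorm_exists _ _ (coef_l1 n1 n2 p)); [|apply coef_l1_nonneg].
  intro h. apply peval_norm_le_coef_l1; auto.
Qed.

Lemma unorm_set_bound (p : ncpoly n1 n2) : forall r, unorm_set p r -> r <= coef_l1 n1 n2 p.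
Proof.
  intros r [H [T1 [T2 [HP Hr]]]]. destruct (in_Pn_facts _ _ _ HP) as [_ [_ [K1 [K2 _]]]].
  apply (opnorm_least _ _ _ _ Hr); [|apply coef_l1_nonneg].
  intro h. apply peval_norm_le_coef_l1; auto.
Qed.

Lemma unorm_set_0 (p : ncpoly n1 n2) : unorm_set p 0.
Proof.
  exists Hunit, (fun _ _ => tt), (fun _ _ => tt). split.
  - split; [apply row_contraction_Hunit|]. split; [apply row_contraction_Hunit|]. reflexivity.
  - split.
    + intros y [h [_ ->]]. rewrite hnorm_Hunit. lra.
    + intros b Hb. apply Hb. exists tt.
      split; [rewrite hnorm_Hunit; lra|]. rewrite hnorm_Hunit. reflexivity.
Qed.

Definition unorm (p : ncpoly n1 n2) : R :=
  proj1_sig (completeness (unorm_set p) (ex_intro _ (coef_l1 n1 n2 p) (unorm_set_bound p))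
    (ex_intro _ 0 (unorm_set_0 p))).

Lemma unorm_lub (p : ncpoly n1 n2) : is_lub (unorm_set p) (unorm p).
Proof. unfold unorm. destruct completeness. simpl. auto. Qed.

Lemma unorm_ge (p : ncpoly n1 n2) r : unorm_set p r -> r <= unorm p.
Proof. intro. apply (proj1 (unorm_lub p)). auto. Qed.

Lemma unorm_le (p : ncpoly n1 n2) b : (forall r, unorm_set p r -> r <= b) -> unorm p <= b.
Proof. intro. apply (proj2 (unorm_lub p)). auto. Qed.

Lemma unorm_nonneg (p : ncpoly n1 n2) : 0 <= unorm p.
Proof. apply unorm_ge, unorm_set_0. Qed.

Lemma Cmod_coeff_le_unorm (p : ncpoly n1 n2) (w : word n1 * word n2) :
  Cmod (coeff p w) <= unorm p.
Proof.
  destruct w as [a b]. set (d1 := length a). set (d2 := length b).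
  pose proof (model_in_Pn n1 n2 d1 d2) as HP.
  destruct (peval_opnorm_exists _ _ _ p HP) as [r Hr].
  rewrite <- (model_coord_peval_vacuum n1 n2 d1 d2) by (unfold d1, d2; lia).
  eapply Rle_trans; [apply Cmod_model_coord_le|].
  eapply Rle_trans; [apply (opnorm_le1 _ _ _ _ Hr), Req_le, hnorm_model_vacuum|].
  apply unorm_ge. do 3 eexists. split; [exact HP|exact Hr].
Qed.

Lemma peval_norm_le_unorm (p : ncpoly n1 n2) (H : Hilbert) T1 T2 (h : H) :
  in_Pn n1 n2 T1 T2 -> hnorm (peval p T1 T2 h) <= unorm p * hnorm h.
Proof.
  intro HP. destruct (in_Pn_facts _ _ _ HP) as [L1 [L2 _]].
  destruct (peval_opnorm_exists _ _ _ p HP) as [r Hr].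
  eapply Rle_trans; [exact (opnorm_bound _ _ _ (peval_homog _ _ _ _ _ L1 L2 p) Hr h)|].
  apply Rmult_le_compat_r; [apply hnorm_nonneg|].
  apply unorm_ge. exists H, T1, T2. auto.
Qed.

Lemma unorm_le_of_bound (p : ncpoly n1 n2) M : 0 <= M ->
  (forall (H : Hilbert) T1 T2 (h : H),
     in_Pn n1 n2 T1 T2 -> hnorm (peval p T1 T2 h) <= M * hnorm h) ->
  unorm p <= M.
Proof.
  intros M0 HM. apply unorm_le. intros r [H [T1 [T2 [HP Hr]]]].
  apply (opnorm_least _ _ _ _ Hr); auto.
Qed.

Lemma unorm_eq0 (p : ncpoly n1 n2) : unorm p = 0 <-> (forall w, coeff p w = C0).
Proof.
  split.
  - intros E w. apply Cmod_eq0, Rle_antisym; [|apply Cmod_nonneg].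
    rewrite <- E. apply Cmod_coeff_le_unorm.
  - intro Hc. apply Rle_antisym; [|apply unorm_nonneg].
    apply unorm_le_of_bound; [lra|]. intros H T1 T2 h _.
    rewrite peval_eq0_of_coeff0 by exact Hc. rewrite hnorm_hzero, Rmult_0_l. lra.
Qed.

Lemma unorm_padd (p q : ncpoly n1 n2) : unorm (padd p q) <= unorm p + unorm q.
Proof.
  apply unorm_le_of_bound; [pose proof (unorm_nonneg p); pose proof (unorm_nonneg q); lra|].
  intros H T1 T2 h HP. unfold padd. rewrite peval_app.
  eapply Rle_trans; [apply hnorm_triangle|].
  pose proof (peval_norm_le_unorm p _ _ _ h HP).
  pose proof (peval_norm_le_unorm q _ _ _ h HP). lra.
Qed.

Lemma unorm_pscale_le a (p : ncpoly n1 n2) : unorm (pscale a p) <= Cmod a * unorm p.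
Proof.
  apply unorm_le_of_bound; [apply Rmult_le_pos; [apply Cmod_nonneg|apply unorm_nonneg]|].
  intros H T1 T2 h HP. rewrite peval_scale, hnorm_scal, Rmult_assoc.
  apply Rmult_le_compat_l; [apply Cmod_nonneg|]. apply peval_norm_le_unorm; exact HP.
Qed.

Lemma unorm_pscale a (p : ncpoly n1 n2) : unorm (pscale a p) = Cmod a * unorm p.
Proof.
  apply Rle_antisym; [apply unorm_pscale_le|].
  destruct (Req_dec (Cmod a) 0) as [Z|Z].
  { rewrite Z, Rmult_0_l. apply unorm_nonneg. }
  assert (Pa : 0 < Cmod a) by (pose proof (Cmod_nonneg a); lra).
  assert (Hp : unorm p <= unorm (pscale a p) / Cmod a).
  { apply unorm_le_of_bound.
    - pose proof (unorm_nonneg (pscale a p)).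
      apply Rmult_le_pos; [lra|left; apply Rinv_0_lt_compat, Pa].
    - intros H T1 T2 h HP. apply (Rmult_le_reg_l (Cmod a)); [exact Pa|].
      rewrite <- hnorm_scal, <- peval_scale.
      replace (Cmod a * (unorm (pscale a p) / Cmod a * hnorm h))
        with (unorm (pscale a p) * hnorm h) by (field; lra).
      apply peval_norm_le_unorm; exact HP. }
  apply (Rmult_le_compat_l (Cmod a)) in Hp; [|lra].
  replace (Cmod a * (unorm (pscale a p) / Cmod a)) with (unorm (pscale a p)) in Hp
    by (field; lra).
  exact Hp.
Qed.

Lemma unorm_pmul (p q : ncpoly n1 n2) : unorm (pmul p q) <= unorm p * unorm q.
Proof.
  apply unorm_le_of_bound; [apply Rmult_le_pos; apply unorm_nonneg|].
  intros H T1 T2 h HP. destruct (in_Pn_facts _ _ _ HP) as [L1 [L2 [_ [_ Cm]]]].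
  rewrite (peval_mul _ _ _ _ _ L1 L2 Cm).
  eapply Rle_trans; [apply peval_norm_le_unorm, HP|].
  rewrite Rmult_assoc. apply Rmult_le_compat_l; [apply unorm_nonneg|].
  apply peval_norm_le_unorm, HP.
Qed.

End UniversalNorm.

Theorem mainTheorem10 (n1 n2 : nat) (hn1 : (1 <= n1)%nat) (hn2 : (1 <= n2)%nat) :
  exists N : ncpoly n1 n2 -> R,
    (forall p, is_lub (unorm_set p) (N p)) /\
    (forall p, 0 <= N p) /\
    (forall p, N p = 0 <-> (forall w, coeff p w = C0)) /\
    (forall p q, N (padd p q) <= N p + N q) /\
    (forall a p, N (pscale a p) = Cmod a * N p) /\
    (forall p q, N (pmul p q) <= N p * N q).
Proof.
  exists (unorm n1 n2).
  split; [apply unorm_lub|]. split; [apply unorm_nonneg|].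
  split; [apply unorm_eq0|]. split; [apply unorm_padd|].
  split; [apply unorm_pscale|]. apply unorm_pmul.
Qed.
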